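(* Fix amplitudes $\overline r_{j,\mathrm{eq}}>0$ and consider the decoupled phase dynamics $$\frac{d\overline\theta_j}{dt}=\frac{\kappa_j}{2C\,\overline r_{j,\mathrm{eq}}}\Big(\iota_j\sin(\overline\theta_j-\gamma_j)-\sum_{\ell\ne j}g_{j\ell}\overline r_{\ell,\mathrm{eq}}\sin(\overline\theta_j-\overline\theta_\ell)\Big),\quad j=1,\dots,N.$$ Assume there is an equilibrium $\overline\theta_{\mathrm{eq}}$ such that $|\overline\theta_{j,\mathrm{eq}}-\overline\theta_{\ell,\mathrm{eq}}|<\pi/2$ and $|\overline\theta_{j,\mathrm{eq}}-\gamma_j|>\pi/2$ for all $j,\ell$ (angle differences measured on the circle, so the latter means $\cos(\overline\theta_{j,\mathrm{eq}}-\gamma_j)<0$). (i) If at least one $\iota_j>0$ (at least one constant-current load), then $\overline\theta_{\mathrm{eq}}$ is locally exponentially stable. (ii) If $\iota_j=0$ for all $j$, then the phase-synchronized equilibrium manifold $\{\overline\theta:\overline\theta_j=\overline\theta_\ell\ \forall j,\ell\}$ is locally exponentially stable.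
   Context: $C>0$, $\kappa_j>0$. Network: a real symmetric $N\times N$ Kron-reduced conductance matrix with off-diagonal entries $-g_{j\ell}$, $g_{j\ell}=g_{\ell j}\ge0$, whose associated graph (edges where $g_{j\ell}>0$) is connected. $\iota_j\ge 0$ and $\gamma_j\in\mathbb R$ are the amplitude and phase offset of an equivalent constant current source at node $j$. Phases live on the torus $\mathbb T^N$. *)

From Stdlib Require Import Reals.
Open Scope R_scope.

(* Nodes are indexed by natural numbers j < N; a phase vector is nat -> R
   (only the coordinates j < N matter). *)

Fixpoint sumN (n : nat) (f : nat -> R) : R :=
  match n with
  | O => 0
  | S m => sumN m f + f m
  end.

Definition normN (N : nat) (v : nat -> R) : R :=
  sqrt (sumN N (fun j => (v j) ^ 2)).

Definition diffv (x y : nat -> R) : nat -> R := fun j => x j - y j.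

Definition constv (c : R) : nat -> R := fun _ => c.

Definition phase_rhs (N : nat) (C : R) (kappa r iota gamma : nat -> R)
  (g : nat -> nat -> R) (th : nat -> R) (j : nat) : R :=
  kappa j / (2 * C * r j) *
  (iota j * sin (th j - gamma j)
   - sumN N (fun l => if Nat.eqb l j then 0
                      else g j l * r l * sin (th j - th l))).

(* x : R -> R^N is a solution of the phase dynamics (solutions of this
   globally Lipschitz vector field exist on all of R). *)
Definition is_solution (N : nat) (C : R) (kappa r iota gamma : nat -> R)
  (g : nat -> nat -> R) (x : R -> nat -> R) : Prop :=
  forall (t : R) (j : nat), (j < N)%nat ->
    derivable_pt_lim (fun s => x s j) t (phase_rhs N C kappa r iota gamma g (x t) j).

Definition is_equilibrium (N : nat) (C : R) (kappa r iota gamma : nat -> R)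
  (g : nat -> nat -> R) (th : nat -> R) : Prop :=
  forall j, (j < N)%nat -> phase_rhs N C kappa r iota gamma g th j = 0.

Inductive reach (N : nat) (g : nat -> nat -> R) : nat -> nat -> Prop :=
  | reach_refl : forall j, (j < N)%nat -> reach N g j j
  | reach_step : forall j k l, (j < N)%nat -> (k < N)%nat -> j <> k ->
      g j k > 0 -> reach N g k l -> reach N g j l.

Definition connected_graph (N : nat) (g : nat -> nat -> R) : Prop :=
  forall j l, (j < N)%nat -> (l < N)%nat -> reach N g j l.

Definition loc_exp_stable_point (N : nat) (C : R) (kappa r iota gamma : nat -> R)
  (g : nat -> nat -> R) (th_eq : nat -> R) : Prop :=
  exists delta M lam : R, delta > 0 /\ M > 0 /\ lam > 0 /\
    forall x : R -> nat -> R,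
      is_solution N C kappa r iota gamma g x ->
      normN N (diffv (x 0) th_eq) < delta ->
      forall t, 0 <= t ->
        normN N (diffv (x t) th_eq) <= M * exp (- lam * t) * normN N (diffv (x 0) th_eq).

(* Local exponential stability of the synchronization manifold
   S = { th | th_j = th_l for all j, l } = { c * 1 | c in R }, with
   dist(th, S) = inf_c |th - c 1| (the infimum is attained). *)
Definition loc_exp_stable_sync (N : nat) (C : R) (kappa r iota gamma : nat -> R)
  (g : nat -> nat -> R) : Prop :=
  exists delta M lam : R, delta > 0 /\ M > 0 /\ lam > 0 /\
    forall x : R -> nat -> R,
      is_solution N C kappa r iota gamma g x ->
      (exists c0, normN N (diffv (x 0) (constv c0)) < delta) ->
      forall t, 0 <= t ->
        forall c0 : R, exists c : R,
          normN N (diffv (x t) (constv c))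
            <= M * exp (- lam * t) * normN N (diffv (x 0) (constv c0)).

From Stdlib Require Import Reals Lra Lia.
Open Scope R_scope.

(* Both parts are a Lyapunov argument for V = sum_j p_j (x_j - e_j)^2 with the weights
   p_j = 2 C r_j^2 / kappa_j, which turn the dynamics into p_j x_j' = r_j F_j(x).  Near a
   reference state e whose phase differences have positive cosine and whose load angles
   have negative cosine, the mean value theorem for sin gives V' <= - 2 c Q(x - e) for the
   quadratic form Q(d) = sum_j r_j iota_j d_j^2 + 1/2 sum_(j <> l) g_jl r_j r_l (d_j - d_l)^2.
   With a load (iota_k > 0), connectivity gives V <= K Q(x - e): chain the edge terms from any
   node to k.  Without loads, sum_j p_j x_j is a first integral, so e is taken to be the
   constant vector at this conserved weighted mean, and Q dominates V by the same chaining.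
   Either way V' <= - 2 (c / K) V, and a barrier argument keeps the trajectory close to e. *)

Lemma sumN_ext n f h : (forall i, (i < n)%nat -> f i = h i) -> sumN n f = sumN n h.
Proof.
induction n as [|n IH]; intros H; simpl; [reflexivity|].
rewrite IH by (intros; apply H; lia). rewrite H by lia. reflexivity.
Qed.

Lemma sumN_plus n f h : sumN n (fun i => f i + h i) = sumN n f + sumN n h.
Proof. induction n as [|n IH]; simpl; [|rewrite IH]; ring. Qed.

Lemma sumN_minus n f h : sumN n (fun i => f i - h i) = sumN n f - sumN n h.
Proof. induction n as [|n IH]; simpl; [|rewrite IH]; ring. Qed.

Lemma sumN_mult_l n c f : sumN n (fun i => c * f i) = c * sumN n f.
Proof. induction n as [|n IH]; simpl; [|rewrite IH]; ring. Qed.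

Lemma sumN_eq0 n f : (forall i, (i < n)%nat -> f i = 0) -> sumN n f = 0.
Proof.
intros H. rewrite (sumN_ext n f (fun _ => 0 * 0)) by (intros; rewrite H; auto; ring).
rewrite sumN_mult_l; ring.
Qed.

Lemma sumN_le n f h : (forall i, (i < n)%nat -> f i <= h i) -> sumN n f <= sumN n h.
Proof.
induction n as [|n IH]; intros H; simpl; [lra|].
apply Rplus_le_compat; [apply IH; intros; apply H|apply H]; lia.
Qed.

Lemma sumN_nonneg n f : (forall i, (i < n)%nat -> 0 <= f i) -> 0 <= sumN n f.
Proof.
intros H. apply Rle_trans with (sumN n (fun _ => 0 * 0)).
- rewrite sumN_mult_l; lra.
- apply sumN_le. intros; rewrite Rmult_0_l; auto.
Qed.

Lemma sumN_term_le n f i :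
  (forall k, (k < n)%nat -> 0 <= f k) -> (i < n)%nat -> f i <= sumN n f.
Proof.
induction n as [|n IH]; intros H Hi; simpl; [lia|].
assert (0 <= sumN n f) by (apply sumN_nonneg; intros; apply H; lia).
destruct (Nat.eq_dec i n) as [->|Hin]; [lra|].
assert (f i <= sumN n f) by (apply IH; [intros; apply H|]; lia).
assert (0 <= f n) by (apply H; lia). lra.
Qed.

Lemma sumN_swap n m (F : nat -> nat -> R) :
  sumN n (fun i => sumN m (fun j => F i j)) = sumN m (fun j => sumN n (fun i => F i j)).
Proof.
induction n as [|n IH]; simpl.
- symmetry. apply sumN_eq0. reflexivity.
- rewrite IH, <- sumN_plus. reflexivity.
Qed.

Lemma sumN_symmetrize n (F : nat -> nat -> R) :
  sumN n (fun j => sumN n (fun l => F j l))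
  = / 2 * sumN n (fun j => sumN n (fun l => F j l + F l j)).
Proof.
rewrite (sumN_ext n (fun j => sumN n (fun l => F j l + F l j))
                  (fun j => sumN n (fun l => F j l) + sumN n (fun l => F l j)))
  by (intros; apply sumN_plus).
rewrite sumN_plus, (sumN_swap n n (fun l j => F j l)). field.
Qed.

Definition small_enough (P : R -> Prop) : Prop :=
  exists m, 0 < m /\ forall m', 0 < m' <= m -> P m'.

Lemma small_enough_and P1 P2 :
  small_enough P1 -> small_enough P2 -> small_enough (fun m => P1 m /\ P2 m).
Proof.
intros [m1 [Hm1 H1]] [m2 [Hm2 H2]]. exists (Rmin m1 m2).
split; [now apply Rmin_glb_lt|].
intros m' Hm'. pose proof (Rmin_l m1 m2). pose proof (Rmin_r m1 m2).
split; [apply H1|apply H2]; lra.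
Qed.

Lemma small_enough_forall n (P : nat -> R -> Prop) :
  (forall i, (i < n)%nat -> small_enough (P i)) ->
  small_enough (fun m => forall i, (i < n)%nat -> P i m).
Proof.
induction n as [|n IH]; intros H.
- exists 1. split; [lra|]. intros; lia.
- destruct (small_enough_and _ _ (IH (fun i Hi => H i ltac:(lia))) (H n ltac:(lia)))
    as [m [Hm Hall]].
  exists m. split; [exact Hm|]. intros m' Hm' i Hi.
  destruct (Hall m' Hm') as [Hlt Hn].
  destruct (Nat.eq_dec i n) as [->|]; [exact Hn|apply Hlt; lia].
Qed.

Lemma small_enough_le a : 0 < a -> small_enough (fun m => m <= a).
Proof. intros Ha. exists a. split; [exact Ha|]. intros; lra. Qed.

Lemma small_enough_witness P : small_enough P -> exists m, 0 < m /\ P m.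
Proof. intros [m [Hm H]]. exists m. split; [|apply H]; lra. Qed.

Lemma cos_lipschitz a b : Rabs (cos a - cos b) <= Rabs (a - b).
Proof.
assert (Hmvt : forall u v, u < v -> Rabs (cos u - cos v) <= Rabs (u - v)).
{ intros u v Huv.
  destruct (MVT_cor2 cos (fun z => - sin z) u v Huv) as [z [Ez _]];
    [intros; apply derivable_pt_lim_cos|].
  rewrite <- Rabs_Ropp, Ropp_minus_distr, Ez, Rabs_mult, (Rabs_minus_sym u v).
  pose proof (Rabs_pos (v - u)).
  assert (Rabs (- sin z) <= 1) by (rewrite Rabs_Ropp; apply Rabs_le, SIN_bound).
  nra. }
destruct (Rtotal_order a b) as [Hab|[->|Hab]].
- now apply Hmvt.
- rewrite !Rminus_diag, Rabs_R0. lra.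
- rewrite Rabs_minus_sym, (Rabs_minus_sym a b). now apply Hmvt.
Qed.

Lemma sin_increment_mvt u v :
  exists z, Rabs (z - u) <= Rabs v /\ sin (u + v) - sin u = cos z * v.
Proof.
destruct (Rtotal_order v 0) as [Hv|[->|Hv]].
- destruct (MVT_cor2 sin cos (u + v) u) as [z [Ez Hz]];
    [lra|intros; apply derivable_pt_lim_sin|].
  exists z. rewrite Rabs_left by lra. rewrite Rabs_left1 by lra.
  split; [lra|]. replace (sin (u + v) - sin u) with (- (sin u - sin (u + v))) by ring.
  rewrite Ez. ring.
- exists u. rewrite Rminus_diag, Rabs_R0, Rplus_0_r. split; [lra|ring].
- destruct (MVT_cor2 sin cos u (u + v)) as [z [Ez Hz]];
    [lra|intros; apply derivable_pt_lim_sin|].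
  exists z. rewrite !Rabs_right by lra. split; [lra|]. rewrite Ez. ring.
Qed.

Lemma sin_increment_cos_bounds u v :
  exists z, cos u - Rabs v <= z <= cos u + Rabs v /\ v * (sin (u + v) - sin u) = z * v ^ 2.
Proof.
destruct (sin_increment_mvt u v) as [z [Hz Ez]]. exists (cos z).
pose proof (cos_lipschitz z u) as Hl.
pose proof (RRle_abs (cos z - cos u)). pose proof (RRle_abs (cos u - cos z)).
rewrite (Rabs_minus_sym (cos u)) in *. split; [lra|].
rewrite Ez. ring.
Qed.

Lemma sin_increment_ge u v c :
  2 * c <= cos u -> Rabs v <= c -> c * v ^ 2 <= v * (sin (u + v) - sin u).
Proof.
intros Hu Hv. destruct (sin_increment_cos_bounds u v) as [z [Hz ->]].
pose proof (pow2_ge_0 v). nra.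
Qed.

Lemma sin_increment_le u v c :
  cos u <= - 2 * c -> Rabs v <= c -> v * (sin (u + v) - sin u) <= - c * v ^ 2.
Proof.
intros Hu Hv. destruct (sin_increment_cos_bounds u v) as [z [Hz ->]].
pose proof (pow2_ge_0 v). nra.
Qed.

Lemma continuity_pt_eps f a eps : continuity_pt f a -> 0 < eps ->
  exists d, 0 < d /\ forall y, Rabs (y - a) < d -> Rabs (f y - f a) < eps.
Proof.
intros Hc He. destruct (Hc eps He) as [d [Hd H]]. exists d. split; [exact Hd|].
intros y Hy. destruct (Req_dec y a) as [->|Hya].
- rewrite Rminus_diag, Rabs_R0. exact He.
- apply (H y). split; [split; [exact I|auto]|exact Hy].
Qed.

(* Take the last time [a] in [0, T] with [phi a <= phi 0]: just after [a] the function is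
   below [W], hence nonincreasing, contradicting [phi > phi 0] on [(a, T]]. *)
Lemma nonincreasing_below_barrier (phi phi' : R -> R) (W : R) :
  (forall t, derivable_pt_lim phi t (phi' t)) ->
  (forall t, 0 < t -> phi t < W -> phi' t <= 0) -> phi 0 < W ->
  forall t, 0 <= t -> phi t <= phi 0.
Proof.
intros Hder Hneg H0 T HT.
destruct (Rle_or_lt (phi T) (phi 0)) as [|HT0]; [assumption|exfalso].
assert (Hcont : forall s, continuity_pt phi s)
  by (intro s; apply derivable_continuous_pt; exists (phi' s); apply Hder).
set (E := fun s => 0 <= s <= T /\ phi s <= phi 0).
destruct (completeness E) as [a [Hub Hlub]].
{ exists T. intros s [Hs _]. lra. }
{ exists 0. split; lra. }
assert (Ha0 : 0 <= a) by (apply Hub; split; lra).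
assert (HaT : a <= T) by (apply Hlub; intros s [Hs _]; lra).
assert (Hafter : forall s, a < s <= T -> phi 0 < phi s).
{ intros s Hs. destruct (Rlt_or_le (phi 0) (phi s)) as [|Hle]; [assumption|].
  assert (s <= a) by (apply Hub; split; lra). lra. }
assert (Hpa : phi a <= phi 0).
{ destruct (Rle_or_lt (phi a) (phi 0)) as [|Hlt]; [assumption|exfalso].
  destruct (continuity_pt_eps phi a (phi a - phi 0) (Hcont a)) as [d [Hd Hnear]]; [lra|].
  assert (a <= a - d); [|lra].
  apply Hlub. intros s [Hs Hps]. destruct (Rle_or_lt s (a - d)) as [|Hsd]; [assumption|].
  assert (s <= a) by (apply Hub; split; assumption).
  assert (Hsa : Rabs (s - a) < d) by (rewrite Rabs_left1; lra).
  specialize (Hnear s Hsa). rewrite Rabs_minus_sym in Hnear.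
  pose proof (RRle_abs (phi a - phi s)). lra. }
destruct (continuity_pt_eps phi a (W - phi a) (Hcont a)) as [d [Hd Hnear]]; [lra|].
assert (HaT' : a < T) by (destruct (Req_dec a T) as [->|]; lra).
set (b := Rmin (a + d / 2) T).
assert (Hab : a < b <= T) by (unfold b, Rmin; destruct Rle_dec; lra).
assert (Hbd : b <= a + d / 2) by apply Rmin_l.
destruct (MVT_cor2 phi phi' a b) as [z [Ez Hz]]; [lra|intros; apply Hder|].
assert (Hzd : Rabs (z - a) < d) by (rewrite Rabs_right; lra).
pose proof (RRle_abs (phi z - phi a)). specialize (Hnear z Hzd).
assert (phi' z <= 0) by (apply Hneg; lra).
specialize (Hafter b Hab). nra.
Qed.

Lemma exp_decay_below_barrier (V V' : R -> R) (W mu : R) :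
  (forall t, derivable_pt_lim V t (V' t)) -> (forall t, 0 <= V t) -> 0 <= mu ->
  (forall t, 0 < t -> V t < W -> V' t <= - (2 * mu) * V t) -> V 0 < W ->
  forall t, 0 <= t -> V t <= exp (- (2 * mu) * t) * V 0.
Proof.
intros Hd HV Hmu Hdiss H0 t Ht.
set (phi := fun s => V s * exp (2 * mu * s)).
set (phi' := fun s => V' s * exp (2 * mu * s) + V s * (2 * mu * exp (2 * mu * s))).
assert (Hphi : forall s, derivable_pt_lim phi s (phi' s)).
{ intros s. apply (derivable_pt_lim_mult V (fun s => exp (2 * mu * s))); [apply Hd|].
  replace (2 * mu * exp (2 * mu * s)) with (exp (2 * mu * s) * (2 * mu)) by ring.
  apply (derivable_pt_lim_comp (fun s => 2 * mu * s) exp s (2 * mu) (exp (2 * mu * s))).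
  - rewrite <- (Rmult_1_r (2 * mu)) at 1. apply derivable_pt_lim_scal, derivable_pt_lim_id.
  - apply derivable_pt_lim_exp. }
assert (Hphi0 : phi 0 = V 0) by (unfold phi; rewrite Rmult_0_r, exp_0; ring).
assert (Hle : phi t <= phi 0).
{ apply (nonincreasing_below_barrier phi phi' W Hphi); [|lra|lra].
  intros s Hs Hlt. unfold phi, phi' in *.
  assert (1 <= exp (2 * mu * s)).
  { pose proof (exp_ineq1_le (2 * mu * s)). nra. }
  pose proof (HV s).
  assert (Hdis : V' s <= - (2 * mu) * V s) by (apply Hdiss; nra).
  nra. }
rewrite Hphi0 in Hle. unfold phi in Hle.
replace (V t) with (exp (- (2 * mu) * t) * (V t * exp (2 * mu * t))).
- apply Rmult_le_compat_l; [apply Rlt_le, exp_pos|exact Hle].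
- replace (exp (- (2 * mu) * t) * (V t * exp (2 * mu * t)))
    with (V t * (exp (- (2 * mu) * t) * exp (2 * mu * t))) by ring.
  rewrite <- exp_plus. replace (- (2 * mu) * t + 2 * mu * t) with 0 by ring.
  rewrite exp_0. ring.
Qed.

Lemma exp_neg_double l t : exp (- (2 * l) * t) = exp (- l * t) ^ 2.
Proof. simpl. rewrite Rmult_1_r, <- exp_plus. f_equal. ring. Qed.

Lemma derivable_pt_lim_sumN n (F : R -> nat -> R) (F' : nat -> R) t :
  (forall j, (j < n)%nat -> derivable_pt_lim (fun s => F s j) t (F' j)) ->
  derivable_pt_lim (fun s => sumN n (F s)) t (sumN n F').
Proof.
induction n as [|n IH]; intros H; simpl.
- apply derivable_pt_lim_const.
- apply (derivable_pt_lim_plus (fun s => sumN n (F s)) (fun s => F s n));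
    [apply IH; intros; apply H|apply H]; lia.
Qed.

Definition wsq (N : nat) (p v : nat -> R) : R := sumN N (fun j => p j * v j ^ 2).

Lemma wsq_nonneg N p v : (forall j, (j < N)%nat -> 0 <= p j) -> 0 <= wsq N p v.
Proof.
intros Hp. apply sumN_nonneg. intros j Hj. pose proof (Hp j Hj). pose proof (pow2_ge_0 (v j)). nra.
Qed.

Lemma Rabs_lt_of_wsq_lt N p pmin v a j :
  (forall k, (k < N)%nat -> pmin <= p k) -> 0 <= pmin -> 0 <= a ->
  wsq N p v < pmin * a ^ 2 -> (j < N)%nat -> Rabs (v j) < a.
Proof.
intros Hp Hpmin Ha Hv Hj.
assert (Hterm : pmin * v j ^ 2 <= wsq N p v).
{ apply Rle_trans with (p j * v j ^ 2).
  - apply Rmult_le_compat_r; [apply pow2_ge_0|apply Hp, Hj].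
  - apply (sumN_term_le N (fun j => p j * v j ^ 2)); [|exact Hj].
    intros k Hk. pose proof (Hp k Hk). pose proof (pow2_ge_0 (v k)). nra. }
assert (Hsq : v j ^ 2 < a ^ 2) by nra.
rewrite <- (Rabs_pos_eq a Ha). apply Rsqr_lt_abs_0. unfold Rsqr. lra.
Qed.

Section WeightedSquares.

Variables (N : nat) (p : nat -> R) (pmin pmax : R).
Hypothesis pmin_pos : 0 < pmin.
Hypothesis pmin_le_pmax : pmin <= pmax.
Hypothesis p_between : forall j, (j < N)%nat -> pmin <= p j <= pmax.

Lemma wsq_ge_sumsq v : pmin * sumN N (fun j => v j ^ 2) <= wsq N p v.
Proof.
rewrite <- sumN_mult_l. apply sumN_le. intros j Hj.
apply Rmult_le_compat_r; [apply pow2_ge_0|apply p_between, Hj].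
Qed.

Lemma wsq_le_sumsq v : wsq N p v <= pmax * sumN N (fun j => v j ^ 2).
Proof.
rewrite <- sumN_mult_l. apply sumN_le. intros j Hj.
apply Rmult_le_compat_r; [apply pow2_ge_0|apply p_between, Hj].
Qed.

Lemma wsq_lt_of_normN_lt v W : 0 < W -> normN N v < sqrt (W / pmax) -> wsq N p v < W.
Proof.
intros HW Hv.
assert (Hsum : sumN N (fun j => v j ^ 2) < W / pmax)
  by (apply sqrt_lt_0_alt, Hv).
apply Rle_lt_trans with (pmax * sumN N (fun j => v j ^ 2)); [apply wsq_le_sumsq|].
apply Rmult_lt_reg_r with (/ pmax); [apply Rinv_0_lt_compat; lra|].
replace (pmax * sumN N (fun j => v j ^ 2) * / pmax) with (sumN N (fun j => v j ^ 2))
  by (field; lra).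
exact Hsum.
Qed.

Lemma normN_le_of_wsq_le v w k : 0 <= k -> wsq N p v <= k ^ 2 * wsq N p w ->
  normN N v <= sqrt (pmax / pmin) * k * normN N w.
Proof.
intros Hk Hvw. unfold normN.
assert (Hw : 0 <= sumN N (fun j => w j ^ 2)) by (apply sumN_nonneg; intros; apply pow2_ge_0).
assert (Hq : 0 <= pmax / pmin) by (apply Rle_mult_inv_pos; lra).
rewrite <- (sqrt_pow2 k Hk), <- sqrt_mult_alt, <- sqrt_mult_alt by nra.
apply sqrt_le_1_alt.
apply Rmult_le_reg_l with pmin; [exact pmin_pos|].
apply Rle_trans with (wsq N p v); [apply wsq_ge_sumsq|].
apply Rle_trans with (k ^ 2 * (pmax * sumN N (fun j => w j ^ 2))).
- apply Rle_trans with (1 := Hvw). apply Rmult_le_compat_l; [nra|apply wsq_le_sumsq].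
- right. field. lra.
Qed.

End WeightedSquares.

Lemma derivable_pt_lim_wsq N p (x : R -> nat -> R) (D : nat -> R) e t :
  (forall j, (j < N)%nat -> derivable_pt_lim (fun s => x s j) t (D j)) ->
  derivable_pt_lim (fun s => wsq N p (diffv (x s) e)) t
    (2 * sumN N (fun j => p j * (x t j - e j) * D j)).
Proof.
intros HD. rewrite <- sumN_mult_l.
apply (derivable_pt_lim_sumN N (fun s j => p j * diffv (x s) e j ^ 2)). intros j Hj.
assert (Hdiff : derivable_pt_lim (fun s => x s j - e j) t (D j - 0))
  by (apply (derivable_pt_lim_minus (fun s => x s j) (fun _ => e j)), derivable_pt_lim_const;
      apply HD, Hj).
replace (2 * (p j * (x t j - e j) * D j))
  with (p j * (INR 2 * (x t j - e j) ^ (2 - 1) * (D j - 0))) by (simpl; ring).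
apply (derivable_pt_lim_scal (fun s => diffv (x s) e j ^ 2)).
apply (derivable_pt_lim_comp (fun s => x s j - e j) (fun y => y ^ 2)); [exact Hdiff|].
apply derivable_pt_lim_pow.
Qed.

Definition wmean (N : nat) (p y : nat -> R) : R := sumN N (fun j => p j * y j) / sumN N p.

Lemma sumN_dev_wmean N p y : (forall j, (j < N)%nat -> 0 < p j) ->
  sumN N (fun j => p j * (y j - wmean N p y)) = 0.
Proof.
intros Hp.
rewrite (sumN_ext N _ (fun j => p j * y j - wmean N p y * p j)) by (intros; ring).
rewrite sumN_minus, sumN_mult_l. unfold wmean.
destruct N as [|n]; [simpl; ring|].
assert (0 < sumN (S n) p).
{ apply Rlt_le_trans with (p n); [apply Hp; lia|].
  apply sumN_term_le; [intros; apply Rlt_le, Hp|]; lia. }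
field. lra.
Qed.

Lemma wsq_dev_wmean_le N p y a : (forall j, (j < N)%nat -> 0 < p j) ->
  wsq N p (diffv y (constv (wmean N p y))) <= wsq N p (diffv y (constv a)).
Proof.
intros Hp. set (m := wmean N p y).
assert (E : wsq N p (diffv y (constv a)) = wsq N p (diffv y (constv m))
   + 2 * (m - a) * sumN N (fun j => p j * (y j - m)) + (m - a) ^ 2 * sumN N p).
{ unfold wsq, diffv, constv. rewrite <- !sumN_mult_l, <- !sumN_plus.
  apply sumN_ext. intros; ring. }
rewrite E, sumN_dev_wmean by exact Hp.
assert (0 <= sumN N p) by (apply sumN_nonneg; intros; apply Rlt_le, Hp; auto).
pose proof (pow2_ge_0 (m - a)). nra.
Qed.

Definition dominated (Q F : (nat -> R) -> R) : Prop := exists K, forall d, F d <= K * Q d.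

Lemma dominated_sumN n Q (F : nat -> (nat -> R) -> R) :
  (forall i, (i < n)%nat -> dominated Q (F i)) -> dominated Q (fun d => sumN n (fun i => F i d)).
Proof.
induction n as [|n IH]; intros H.
- exists 0. intros d. simpl. lra.
- destruct IH as [K1 H1]; [intros; apply H; lia|].
  destruct (H n) as [K2 H2]; [lia|].
  exists (K1 + K2). intros d. simpl. specialize (H1 d). specialize (H2 d). lra.
Qed.

Lemma dominated_scal Q F a : 0 <= a -> dominated Q F -> dominated Q (fun d => a * F d).
Proof.
intros Ha [K HK]. exists (a * K). intros d. rewrite Rmult_assoc.
apply Rmult_le_compat_l; [exact Ha|apply HK].
Qed.

Lemma dominated_pos Q F : (forall d, 0 <= Q d) -> dominated Q F ->
  exists K, 0 < K /\ forall d, F d <= K * Q d.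
Proof.
intros HQ [K HK]. exists (Rabs K + 1). split; [pose proof (Rabs_pos K); lra|].
intros d. specialize (HK d). specialize (HQ d). pose proof (RRle_abs K). nra.
Qed.

(* [(a - c)^2 <= 2 (a - b)^2 + 2 (b - c)^2] along each edge of a path. *)
Lemma dominated_along_reach N g Q (z : (nat -> R) -> R) :
  (forall j k, (j < N)%nat -> (k < N)%nat -> j <> k -> g j k > 0 ->
     dominated Q (fun d => (d j - d k) ^ 2)) ->
  forall j l, reach N g j l ->
  dominated Q (fun d => (d l - z d) ^ 2) -> dominated Q (fun d => (d j - z d) ^ 2).
Proof.
intros Hedge j l Hr. induction Hr as [j Hj|j k l Hj Hk Hjk Hg Hr IH]; intros Hl; [exact Hl|].
destruct (IH Hl) as [K1 H1]. destruct (Hedge j k Hj Hk Hjk Hg) as [K2 H2].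
exists (2 * K2 + 2 * K1). intros d. specialize (H1 d). specialize (H2 d).
pose proof (pow2_ge_0 (d j - d k - (d k - z d))). nra.
Qed.

Definition edge_energy N (g : nat -> nat -> R) (r d : nat -> R) : R :=
  sumN N (fun j => sumN N (fun l =>
    if Nat.eqb l j then 0 else g j l * r j * r l * (d j - d l) ^ 2)).

Definition dissipation N (iota : nat -> R) g r (d : nat -> R) : R :=
  sumN N (fun j => r j * iota j * d j ^ 2) + / 2 * edge_energy N g r d.

Section Dissipation.

Variables (N : nat) (iota r : nat -> R) (g : nat -> nat -> R).
Hypothesis iota_nonneg : forall j, (j < N)%nat -> 0 <= iota j.
Hypothesis r_pos : forall j, (j < N)%nat -> 0 < r j.
Hypothesis g_nonneg : forall j l, (j < N)%nat -> (l < N)%nat -> j <> l -> g j l >= 0.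

Lemma load_term_nonneg d j : (j < N)%nat -> 0 <= r j * iota j * d j ^ 2.
Proof.
intros Hj. pose proof (r_pos j Hj). pose proof (iota_nonneg j Hj). pose proof (pow2_ge_0 (d j)).
apply Rmult_le_pos; [apply Rmult_le_pos|]; lra.
Qed.

Lemma edge_term_nonneg d j l : (j < N)%nat -> (l < N)%nat ->
  0 <= (if Nat.eqb l j then 0 else g j l * r j * r l * (d j - d l) ^ 2).
Proof.
intros Hj Hl. destruct (Nat.eqb_spec l j) as [|Hlj]; [lra|].
pose proof (r_pos j Hj). pose proof (r_pos l Hl). pose proof (g_nonneg j l Hj Hl (not_eq_sym Hlj)).
pose proof (pow2_ge_0 (d j - d l)).
apply Rmult_le_pos; [apply Rmult_le_pos; [apply Rmult_le_pos|]|]; lra.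
Qed.

Lemma edge_energy_nonneg d : 0 <= edge_energy N g r d.
Proof.
apply sumN_nonneg. intros j Hj. apply sumN_nonneg. intros l Hl. now apply edge_term_nonneg.
Qed.

Lemma dissipation_nonneg d : 0 <= dissipation N iota g r d.
Proof.
unfold dissipation. pose proof (edge_energy_nonneg d).
assert (0 <= sumN N (fun j => r j * iota j * d j ^ 2)) by (apply sumN_nonneg, load_term_nonneg).
lra.
Qed.

Lemma dissipation_dominates_edge j k : (j < N)%nat -> (k < N)%nat -> j <> k -> g j k > 0 ->
  dominated (dissipation N iota g r) (fun d => (d j - d k) ^ 2).
Proof.
intros Hj Hk Hjk Hg.
assert (Hw : 0 < g j k * r j * r k)
  by (pose proof (r_pos j Hj); pose proof (r_pos k Hk); repeat apply Rmult_lt_0_compat; lra).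
exists (2 / (g j k * r j * r k)). intros d.
assert (Hedge : g j k * r j * r k * (d j - d k) ^ 2 <= edge_energy N g r d).
{ apply Rle_trans with (sumN N (fun l =>
    if Nat.eqb l j then 0 else g j l * r j * r l * (d j - d l) ^ 2)).
  - replace (g j k * r j * r k * (d j - d k) ^ 2)
      with (if Nat.eqb k j then 0 else g j k * r j * r k * (d j - d k) ^ 2)
      by (destruct (Nat.eqb_spec k j); [congruence|reflexivity]).
    apply (sumN_term_le N (fun l =>
      if Nat.eqb l j then 0 else g j l * r j * r l * (d j - d l) ^ 2));
      [intros; now apply edge_term_nonneg|exact Hk].
  - apply (sumN_term_le N (fun j => sumN N (fun l =>
      if Nat.eqb l j then 0 else g j l * r j * r l * (d j - d l) ^ 2))); [|exact Hj].
    intros i Hi. apply sumN_nonneg. intros; now apply edge_term_nonneg. }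
assert (0 <= sumN N (fun j => r j * iota j * d j ^ 2)) by (apply sumN_nonneg, load_term_nonneg).
unfold dissipation. set (w := g j k * r j * r k) in *.
apply Rmult_le_reg_l with w; [exact Hw|].
replace (w * (2 / w * (sumN N (fun j => r j * iota j * d j ^ 2) + / 2 * edge_energy N g r d)))
  with (2 * sumN N (fun j => r j * iota j * d j ^ 2) + edge_energy N g r d) by (field; lra).
lra.
Qed.

Lemma dissipation_dominates_load k : (k < N)%nat -> iota k > 0 ->
  dominated (dissipation N iota g r) (fun d => (d k - 0) ^ 2).
Proof.
intros Hk Hi. assert (Hw : 0 < r k * iota k) by (pose proof (r_pos k Hk); nra).
exists (/ (r k * iota k)). intros d.
assert (Hload : r k * iota k * d k ^ 2 <= sumN N (fun j => r j * iota j * d j ^ 2))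
  by (apply (sumN_term_le N (fun j => r j * iota j * d j ^ 2));
      [apply load_term_nonneg|exact Hk]).
pose proof (edge_energy_nonneg d). unfold dissipation.
apply Rmult_le_reg_l with (r k * iota k); [exact Hw|].
rewrite <- Rmult_assoc, Rinv_r, Rminus_0_r by lra. lra.
Qed.

Hypothesis connected : connected_graph N g.

Lemma wsq_dominated_of_load p k : (forall j, (j < N)%nat -> 0 <= p j) ->
  (k < N)%nat -> iota k > 0 -> dominated (dissipation N iota g r) (wsq N p).
Proof.
intros Hp Hk Hi. unfold wsq.
apply (dominated_sumN N _ (fun j d => p j * d j ^ 2)). intros j Hj.
apply dominated_scal; [apply Hp, Hj|].
destruct (dominated_along_reach N g _ (fun _ => 0) dissipation_dominates_edge j k
  (connected j k Hj Hk) (dissipation_dominates_load k Hk Hi)) as [K HK].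
exists K. intros d. rewrite <- (Rminus_0_r (d j)). apply HK.
Qed.

Lemma wsq_dev_dominated p : (forall j, (j < N)%nat -> 0 <= p j) ->
  dominated (dissipation N iota g r) (fun d => wsq N p (diffv d (constv (d 0%nat)))).
Proof.
intros Hp. unfold wsq.
apply (dominated_sumN N _ (fun j d => p j * diffv d (constv (d 0%nat)) j ^ 2)). intros j Hj.
apply dominated_scal; [apply Hp, Hj|].
apply (dominated_along_reach N g _ (fun d => d 0%nat) dissipation_dominates_edge j 0%nat).
- apply connected; lia.
- exists 0. intros d. rewrite Rminus_diag. simpl. lra.
Qed.

End Dissipation.

Definition coupling N (g : nat -> nat -> R) (r y : nat -> R) (j : nat) : R :=
  sumN N (fun l => if Nat.eqb l j then 0 else g j l * r l * sin (y j - y l)).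

Definition phase_force N (iota gamma : nat -> R) g r (y : nat -> R) (j : nat) : R :=
  iota j * sin (y j - gamma j) - coupling N g r y j.

Definition phase_margin N (iota gamma : nat -> R) (e : nat -> R) (c : R) : Prop :=
  (forall j l, (j < N)%nat -> (l < N)%nat -> 2 * c <= cos (e j - e l)) /\
  (forall j, (j < N)%nat -> iota j = 0 \/ cos (e j - gamma j) <= - 2 * c).

Lemma phase_margin_exists N iota gamma e :
  (forall j l, (j < N)%nat -> (l < N)%nat -> cos (e j - e l) > 0) ->
  (forall j, (j < N)%nat -> cos (e j - gamma j) < 0) ->
  exists c, 0 < c /\ phase_margin N iota gamma e c.
Proof.
intros Hclose Hload.
destruct (small_enough_witness _ (small_enough_forall N
  (fun j m => (forall l, (l < N)%nat -> m <= cos (e j - e l) / 2) /\ m <= - cos (e j - gamma j) / 2)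
  (fun j Hj => small_enough_and _ _
     (small_enough_forall N _ (fun l Hl => small_enough_le (cos (e j - e l) / 2)
        ltac:(specialize (Hclose j l Hj Hl); lra)))
     (small_enough_le (- cos (e j - gamma j) / 2) ltac:(specialize (Hload j Hj); lra)))))
  as [c [Hc Hm]].
exists c. split; [exact Hc|]. split.
- intros j l Hj Hl. destruct (Hm j Hj) as [H _]. specialize (H l Hl). lra.
- intros j Hj. right. destruct (Hm j Hj) as [_ H]. lra.
Qed.

Definition phase_weight (C : R) (kappa r : nat -> R) (j : nat) : R := 2 * C * r j ^ 2 / kappa j.

Section PhaseDynamics.

Variables (N : nat) (C : R) (kappa r iota gamma : nat -> R) (g : nat -> nat -> R).
Hypothesis C_pos : C > 0.
Hypothesis kappa_pos : forall j, (j < N)%nat -> kappa j > 0.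
Hypothesis r_pos : forall j, (j < N)%nat -> r j > 0.
Hypothesis iota_nonneg : forall j, (j < N)%nat -> iota j >= 0.
Hypothesis g_sym : forall j l, (j < N)%nat -> (l < N)%nat -> g j l = g l j.
Hypothesis g_nonneg : forall j l, (j < N)%nat -> (l < N)%nat -> j <> l -> g j l >= 0.

Let iota_nonneg_le j (Hj : (j < N)%nat) : 0 <= iota j := Rge_le _ _ (iota_nonneg j Hj).

(* Antisymmetry of [g j l * sin (y j - y l)] makes the two orientations of an edge pair up. *)
Lemma coupling_increment_ge y e c : 0 <= c ->
  (forall j l, (j < N)%nat -> (l < N)%nat -> 2 * c <= cos (e j - e l)) ->
  (forall j, (j < N)%nat -> Rabs (y j - e j) <= c / 2) ->
  c * edge_energy N g r (diffv y e)
  <= 2 * sumN N (fun j => r j * (y j - e j) * (coupling N g r y j - coupling N g r e j)).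
Proof.
intros Hc Hcos Hy. set (d := diffv y e).
set (F := fun j l => if Nat.eqb l j then 0 else
  g j l * r j * r l * (d j * (sin (e j - e l + (d j - d l)) - sin (e j - e l)))).
assert (Hsplit : sumN N (fun j => r j * (y j - e j) * (coupling N g r y j - coupling N g r e j))
                 = sumN N (fun j => sumN N (fun l => F j l))).
{ apply sumN_ext. intros j Hj. unfold coupling.
  rewrite <- sumN_minus, <- sumN_mult_l. apply sumN_ext. intros l Hl. unfold F.
  destruct (Nat.eqb l j); [ring|].
  replace (e j - e l + (d j - d l)) with (y j - y l) by (unfold d, diffv; ring).
  unfold d, diffv. ring. }
rewrite Hsplit, sumN_symmetrize, <- Rmult_assoc, Rinv_r, Rmult_1_l by lra.
unfold edge_energy. rewrite <- sumN_mult_l. apply sumN_le. intros j Hj.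
rewrite <- sumN_mult_l. apply sumN_le. intros l Hl. unfold F.
rewrite (Nat.eqb_sym j l). destruct (Nat.eqb_spec l j) as [|Hlj]; [lra|].
rewrite (g_sym l j Hl Hj).
replace (e l - e j + (d l - d j)) with (- (e j - e l + (d j - d l))) by ring.
replace (e l - e j) with (- (e j - e l)) by ring. rewrite !sin_neg.
assert (Hdjl : Rabs (d j - d l) <= c).
{ pose proof (Hy j Hj). pose proof (Hy l Hl). unfold d, diffv.
  replace (y j - e j - (y l - e l)) with ((y j - e j) + - (y l - e l)) by ring.
  eapply Rle_trans; [apply Rabs_triang|]. rewrite Rabs_Ropp. lra. }
pose proof (sin_increment_ge (e j - e l) (d j - d l) c (Hcos j l Hj Hl) Hdjl).
assert (0 <= g j l * r j * r l).
{ pose proof (r_pos j Hj). pose proof (r_pos l Hl).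
  pose proof (g_nonneg j l Hj Hl (not_eq_sym Hlj)).
  apply Rmult_le_pos; [apply Rmult_le_pos|]; lra. }
apply Rle_trans with (g j l * r j * r l * (c * (d j - d l) ^ 2)); [right; ring|].
apply Rle_trans with
  (g j l * r j * r l * ((d j - d l) * (sin (e j - e l + (d j - d l)) - sin (e j - e l)))).
- apply Rmult_le_compat_l; assumption.
- right. ring.
Qed.

Lemma phase_force_dissipative y e c : 0 < c -> phase_margin N iota gamma e c ->
  (forall j, (j < N)%nat -> Rabs (y j - e j) <= c / 2) ->
  sumN N (fun j => r j * (y j - e j) *
    (phase_force N iota gamma g r y j - phase_force N iota gamma g r e j))
  <= - c * dissipation N iota g r (diffv y e).
Proof.
intros Hc [Hcos Hload] Hy.
pose proof (coupling_increment_ge y e c (Rlt_le _ _ Hc) Hcos Hy) as Hcpl.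
assert (Hld : sumN N (fun j =>
                r j * (y j - e j) * (iota j * (sin (y j - gamma j) - sin (e j - gamma j))))
              <= - c * sumN N (fun j => r j * iota j * diffv y e j ^ 2)).
{ rewrite <- sumN_mult_l. apply sumN_le. intros j Hj. unfold diffv.
  pose proof (r_pos j Hj). pose proof (iota_nonneg_le j Hj).
  destruct (Hload j Hj) as [->|Hcj]; [right; ring|].
  assert (Habs : Rabs (y j - e j) <= c) by (pose proof (Hy j Hj); lra).
  pose proof (sin_increment_le (e j - gamma j) (y j - e j) c Hcj Habs).
  replace (e j - gamma j + (y j - e j)) with (y j - gamma j) in * by ring.
  apply Rle_trans with (r j * iota j * ((y j - e j) * (sin (y j - gamma j) - sin (e j - gamma j)))).
  - right. ring.
  - apply Rle_trans with (r j * iota j * (- c * (y j - e j) ^ 2)); [|right; ring].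
    apply Rmult_le_compat_l; [nra|assumption]. }
unfold phase_force, dissipation.
rewrite (sumN_ext N _ (fun j =>
  r j * (y j - e j) * (iota j * (sin (y j - gamma j) - sin (e j - gamma j)))
  - r j * (y j - e j) * (coupling N g r y j - coupling N g r e j))) by (intros; ring).
rewrite sumN_minus. lra.
Qed.

Let p := phase_weight C kappa r.

Lemma phase_weight_pos j : (j < N)%nat -> 0 < p j.
Proof.
intros Hj. pose proof (kappa_pos j Hj). pose proof (r_pos j Hj). unfold p, phase_weight.
apply Rdiv_lt_0_compat; [|lra]. apply Rmult_lt_0_compat; [lra|]. apply pow_lt. lra.
Qed.

Lemma phase_weight_rhs y j : (j < N)%nat ->
  p j * phase_rhs N C kappa r iota gamma g y j = r j * phase_force N iota gamma g r y j.
Proof.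
intros Hj. pose proof (kappa_pos j Hj). pose proof (r_pos j Hj).
unfold p, phase_weight, phase_rhs, phase_force, coupling. field. lra.
Qed.

Lemma phase_force_eq0 e : is_equilibrium N C kappa r iota gamma g e ->
  forall j, (j < N)%nat -> phase_force N iota gamma g r e j = 0.
Proof.
intros He j Hj. pose proof (r_pos j Hj).
apply Rmult_eq_reg_l with (r j); [|lra].
rewrite <- phase_weight_rhs, He by exact Hj. ring.
Qed.

Lemma phase_weight_bounds : exists pmin pmax, 0 < pmin /\ pmin <= pmax /\
  forall j, (j < N)%nat -> pmin <= p j <= pmax.
Proof.
destruct (small_enough_witness _ (small_enough_and _ _ (small_enough_le 1 Rlt_0_1)
  (small_enough_forall N (fun j m => m <= p j)
     (fun j Hj => small_enough_le (p j) (phase_weight_pos j Hj))))) as [pmin [Hpmin [H1 Hp]]].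
exists pmin, (1 + sumN N p). split; [exact Hpmin|].
assert (Hsum : forall j, (j < N)%nat -> p j <= sumN N p)
  by (intros; apply sumN_term_le; [intros; apply Rlt_le, phase_weight_pos|]; assumption).
assert (0 <= sumN N p) by (apply sumN_nonneg; intros; apply Rlt_le, phase_weight_pos; assumption).
split; [lra|]. intros j Hj. specialize (Hp j Hj). specialize (Hsum j Hj). lra.
Qed.

(* Below the barrier [V < pmin (c/2)^2] every [|x_j - e_j|] is less than [c/2], which is
   where [phase_force_dissipative] applies. *)
Lemma phase_error_decay x e c K pmin :
  is_solution N C kappa r iota gamma g x ->
  (forall j, (j < N)%nat -> phase_force N iota gamma g r e j = 0) ->
  0 < c -> phase_margin N iota gamma e c ->
  0 < pmin -> (forall j, (j < N)%nat -> pmin <= p j) ->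
  0 < K -> (forall s, wsq N p (diffv (x s) e) <= K * dissipation N iota g r (diffv (x s) e)) ->
  wsq N p (diffv (x 0) e) < pmin * (c / 2) ^ 2 ->
  forall t, 0 <= t ->
    wsq N p (diffv (x t) e) <= exp (- (2 * (c / K)) * t) * wsq N p (diffv (x 0) e).
Proof.
intros Hsol He Hc Hm Hpmin Hp HK Hdom H0.
assert (Hp0 : forall j, (j < N)%nat -> 0 <= p j) by (intros; apply Rlt_le, phase_weight_pos; auto).
apply (exp_decay_below_barrier (fun s => wsq N p (diffv (x s) e))
  (fun s => 2 * sumN N (fun j => p j * (x s j - e j) * phase_rhs N C kappa r iota gamma g (x s) j))
  (pmin * (c / 2) ^ 2) (c / K)).
- intros t. apply derivable_pt_lim_wsq. intros j Hj. apply Hsol, Hj.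
- intros s. apply wsq_nonneg, Hp0.
- apply Rlt_le, Rdiv_lt_0_compat; assumption.
- intros s _ Hs. cbv beta in Hs |- *.
  assert (Hclose : forall j, (j < N)%nat -> Rabs (x s j - e j) <= c / 2).
  { intros j Hj. apply Rlt_le.
    apply (Rabs_lt_of_wsq_lt N p pmin (diffv (x s) e) (c / 2) j Hp); [lra..|exact Hs|exact Hj]. }
  assert (Hweighted :
    sumN N (fun j => p j * (x s j - e j) * phase_rhs N C kappa r iota gamma g (x s) j)
    = sumN N (fun j => r j * (x s j - e j) *
        (phase_force N iota gamma g r (x s) j - phase_force N iota gamma g r e j))).
  { apply sumN_ext. intros j Hj.
    rewrite He, Rminus_0_r, Rmult_assoc, (Rmult_comm (r j)), Rmult_assoc,
      <- phase_weight_rhs by exact Hj.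
    ring. }
  rewrite Hweighted.
  pose proof (phase_force_dissipative (x s) e c Hc Hm Hclose) as Hdiss.
  specialize (Hdom s).
  assert (Hquot : c / K * wsq N p (diffv (x s) e) <= c * dissipation N iota g r (diffv (x s) e)).
  { apply Rmult_le_reg_l with K; [exact HK|].
    replace (K * (c / K * wsq N p (diffv (x s) e))) with (c * wsq N p (diffv (x s) e))
      by (field; lra).
    replace (K * (c * dissipation N iota g r (diffv (x s) e)))
      with (c * (K * dissipation N iota g r (diffv (x s) e))) by ring.
    apply Rmult_le_compat_l; lra. }
  lra.
- exact H0.
Qed.

Lemma sumN_coupling_eq0 y : sumN N (fun j => r j * coupling N g r y j) = 0.
Proof.
rewrite (sumN_ext N _ (fun j => sumN N (fun l =>
  if Nat.eqb l j then 0 else g j l * r j * r l * sin (y j - y l)))).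
- rewrite sumN_symmetrize. rewrite sumN_eq0; [ring|]. intros j Hj. apply sumN_eq0. intros l Hl.
  rewrite (Nat.eqb_sym j l). destruct (Nat.eqb l j); [ring|].
  rewrite (g_sym l j Hl Hj). replace (y l - y j) with (- (y j - y l)) by ring.
  rewrite sin_neg. ring.
- intros j Hj. unfold coupling. rewrite <- sumN_mult_l. apply sumN_ext. intros l Hl.
  destruct (Nat.eqb l j); ring.
Qed.

Section NoLoad.

Hypothesis no_load : forall j, (j < N)%nat -> iota j = 0.

Lemma phase_force_const m j : (j < N)%nat -> phase_force N iota gamma g r (constv m) j = 0.
Proof.
intros Hj. unfold phase_force, coupling, constv. rewrite no_load by exact Hj.
rewrite sumN_eq0; [ring|]. intros l Hl. destruct (Nat.eqb l j); [reflexivity|].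
rewrite Rminus_diag, sin_0. ring.
Qed.

Lemma phase_margin_const m : phase_margin N iota gamma (constv m) (/ 2).
Proof.
split.
- intros j l _ _. unfold constv. rewrite Rminus_diag, cos_0. lra.
- intros j Hj. left. apply no_load, Hj.
Qed.

(* [sum_j p j * x_j' = - sum_j r j * coupling x j], which vanishes by antisymmetry. *)
Lemma wmean_conserved x : is_solution N C kappa r iota gamma g x ->
  forall s, wmean N p (x s) = wmean N p (x 0).
Proof.
intros Hsol.
set (S := fun s => sumN N (fun j => p j * x s j)).
assert (HS : forall s, derivable_pt_lim S s 0).
{ intros s. replace 0 with (sumN N (fun j => p j * phase_rhs N C kappa r iota gamma g (x s) j)).
  - apply (derivable_pt_lim_sumN N (fun s j => p j * x s j)). intros j Hj.
    apply (derivable_pt_lim_scal (fun s => x s j)), Hsol, Hj.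
  - rewrite (sumN_ext N _ (fun j => -1 * (r j * coupling N g r (x s) j))).
    + rewrite sumN_mult_l, sumN_coupling_eq0. ring.
    + intros j Hj. rewrite phase_weight_rhs by exact Hj. unfold phase_force.
      rewrite no_load by exact Hj. ring. }
assert (Hconst : forall a b, a < b -> S a = S b).
{ intros a b Hab. destruct (MVT_cor2 S (fun _ => 0) a b Hab) as [z [Ez _]];
    [intros; apply HS|lra]. }
intros s. unfold wmean. fold (S s) (S 0). f_equal.
destruct (Rtotal_order s 0) as [Hs|[->|Hs]];
  [apply Hconst, Hs|reflexivity|symmetry; apply Hconst, Hs].
Qed.

End NoLoad.

Lemma phase_norm_decay x e c K pmin pmax w :
  is_solution N C kappa r iota gamma g x ->
  (forall j, (j < N)%nat -> phase_force N iota gamma g r e j = 0) ->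
  0 < c -> phase_margin N iota gamma e c ->
  0 < pmin -> pmin <= pmax -> (forall j, (j < N)%nat -> pmin <= p j <= pmax) ->
  0 < K -> (forall s, wsq N p (diffv (x s) e) <= K * dissipation N iota g r (diffv (x s) e)) ->
  wsq N p (diffv (x 0) e) < pmin * (c / 2) ^ 2 -> wsq N p (diffv (x 0) e) <= wsq N p w ->
  forall t, 0 <= t ->
    normN N (diffv (x t) e) <= sqrt (pmax / pmin) * exp (- (c / K) * t) * normN N w.
Proof.
intros Hsol He Hc Hm Hpmin Hpp Hp HK Hdom H0 Hw t Ht.
apply (normN_le_of_wsq_le N p pmin pmax Hpmin Hpp Hp); [apply Rlt_le, exp_pos|].
rewrite <- exp_neg_double.
apply Rle_trans with (exp (- (2 * (c / K)) * t) * wsq N p (diffv (x 0) e)).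
- apply (phase_error_decay x e c K pmin); try assumption. intros j Hj. apply Hp, Hj.
- apply Rmult_le_compat_l; [apply Rlt_le, exp_pos|exact Hw].
Qed.

Hypothesis connected : connected_graph N g.

Lemma loc_exp_stable_point_of_load e k :
  is_equilibrium N C kappa r iota gamma g e ->
  (forall j l, (j < N)%nat -> (l < N)%nat -> cos (e j - e l) > 0) ->
  (forall j, (j < N)%nat -> cos (e j - gamma j) < 0) ->
  (k < N)%nat -> iota k > 0 ->
  loc_exp_stable_point N C kappa r iota gamma g e.
Proof.
intros He Hclose Hload Hk Hik.
destruct (phase_margin_exists N iota gamma e Hclose Hload) as [c [Hc Hm]].
destruct phase_weight_bounds as [pmin [pmax [Hpmin [Hpp Hp]]]].
destruct (dominated_pos _ _ (dissipation_nonneg N iota r g iota_nonneg_le r_pos g_nonneg)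
  (wsq_dominated_of_load N iota r g iota_nonneg_le r_pos g_nonneg connected p k
     (fun j Hj => Rlt_le _ _ (phase_weight_pos j Hj)) Hk Hik)) as [K [HK Hdom]].
set (W := pmin * (c / 2) ^ 2).
assert (HW : 0 < W) by (apply Rmult_lt_0_compat; [|apply pow_lt]; lra).
exists (sqrt (W / pmax)), (sqrt (pmax / pmin)), (c / K).
split; [apply sqrt_lt_R0, Rdiv_lt_0_compat; lra|].
split; [apply sqrt_lt_R0, Rdiv_lt_0_compat; lra|].
split; [apply Rdiv_lt_0_compat; lra|].
intros x Hsol Hx0 t Ht.
apply (phase_norm_decay x e c K pmin pmax); auto using phase_force_eq0, Rle_refl.
apply (wsq_lt_of_normN_lt N p pmin pmax); assumption.
Qed.

Lemma loc_exp_stable_sync_of_no_load : (forall j, (j < N)%nat -> iota j = 0) ->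
  loc_exp_stable_sync N C kappa r iota gamma g.
Proof.
intros Hz. set (c := / 2).
destruct phase_weight_bounds as [pmin [pmax [Hpmin [Hpp Hp]]]].
assert (Hp0 : forall j, (j < N)%nat -> 0 < p j) by exact phase_weight_pos.
destruct (dominated_pos _ _ (dissipation_nonneg N iota r g iota_nonneg_le r_pos g_nonneg)
  (wsq_dev_dominated N iota r g iota_nonneg_le r_pos g_nonneg connected p
     (fun j Hj => Rlt_le _ _ (Hp0 j Hj)))) as [K [HK Hdom]].
set (W := pmin * (c / 2) ^ 2).
assert (HW : 0 < W) by (unfold W, c; apply Rmult_lt_0_compat; [|apply pow_lt]; lra).
exists (sqrt (W / pmax)), (sqrt (pmax / pmin)), (c / K).
split; [apply sqrt_lt_R0, Rdiv_lt_0_compat; lra|].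
split; [apply sqrt_lt_R0, Rdiv_lt_0_compat; lra|].
split; [apply Rdiv_lt_0_compat; unfold c; lra|].
intros x Hsol [a Ha] t Ht c0.
set (m := wmean N p (x 0)). exists m.
apply (phase_norm_decay x (constv m) c K pmin pmax); auto.
- intros j Hj. apply phase_force_const; assumption.
- unfold c. lra.
- apply phase_margin_const, Hz.
- (* [m] remains the weighted mean of [x s], the best constant approximation *)
  intros s. set (d := diffv (x s) (constv m)).
  apply Rle_trans with (wsq N p (diffv d (constv (d 0%nat)))); [|apply Hdom].
  replace (wsq N p (diffv d (constv (d 0%nat))))
    with (wsq N p (diffv (x s) (constv (x s 0%nat))))
    by (apply sumN_ext; intros; unfold d, diffv, constv; ring).
  unfold d, m. rewrite <- (wmean_conserved Hz x Hsol s). apply wsq_dev_wmean_le, Hp0.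
- apply Rle_lt_trans with (wsq N p (diffv (x 0) (constv a))); [apply wsq_dev_wmean_le, Hp0|].
  apply (wsq_lt_of_normN_lt N p pmin pmax); assumption.
- apply wsq_dev_wmean_le, Hp0.
Qed.

End PhaseDynamics.

Theorem theorem4 (N : nat) (C : R) (kappa r iota gamma : nat -> R)
  (g : nat -> nat -> R) (th_eq : nat -> R)
  (hC : C > 0)
  (hkappa : forall j, (j < N)%nat -> kappa j > 0)
  (hr : forall j, (j < N)%nat -> r j > 0)
  (hiota : forall j, (j < N)%nat -> iota j >= 0)
  (hg_sym : forall j l, (j < N)%nat -> (l < N)%nat -> g j l = g l j)
  (hg_nonneg : forall j l, (j < N)%nat -> (l < N)%nat -> j <> l -> g j l >= 0)
  (hconn : connected_graph N g)
  (heq : is_equilibrium N C kappa r iota gamma g th_eq)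
  (hclose : forall j l, (j < N)%nat -> (l < N)%nat -> cos (th_eq j - th_eq l) > 0)
  (hload : forall j, (j < N)%nat -> cos (th_eq j - gamma j) < 0) :
  ((exists j, (j < N)%nat /\ iota j > 0) ->
     loc_exp_stable_point N C kappa r iota gamma g th_eq) /\
  ((forall j, (j < N)%nat -> iota j = 0) ->
     loc_exp_stable_sync N C kappa r iota gamma g).
Proof.
split.
- intros [k [Hk Hik]]. eapply loc_exp_stable_point_of_load; eassumption.
- eapply loc_exp_stable_sync_of_no_load; eassumption.
Qed.
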